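(* Let $n$ be a positive integer and $N=n^2+1$. Then for every integer $0\le k\le n$, $$(\Delta^k\delta_e,\delta_e)_{\ell^2(H)}=(\Delta_N^k\delta_e,\delta_e)_{\ell^2(H_N)}.$$
   Context: $H$ is the discrete Heisenberg group of $3\times3$ upper unitriangular integer matrices $\begin{pmatrix}1&k&m\\0&1&\ell\\0&0&1\end{pmatrix}$, $k,\ell,m\in\mathbb Z$; for $N\ge2$, $H_N$ is the analogous group with entries in $\mathbb Z/N\mathbb Z$. In both groups $x$ is the matrix with $k=1,\ell=m=0$ and $y$ the matrix with $\ell=1,k=m=0$. $\Delta=\frac14(x+x^{-1}+y+y^{-1})$ is the Laplace operator, an element of the group algebra of $H$ acting on $\ell^2(H)$ via the left regular representation; likewise $\Delta_N=\frac14(x+x^{-1}+y+y^{-1})$ acts on $\ell^2(H_N)$. $\delta_e$ denotes the indicator function of the identity element in the respective group. *)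

From mathcomp Require Import all_boot all_order all_algebra.
Set Implicit Arguments. Unset Strict Implicit. Unset Printing Implicit Defensive.
Import Order.TTheory GRing.Theory Num.Theory.
Local Open Scope ring_scope.

(* Heisenberg group over a commutative ring A: the unitriangular matrix
   [[1,k,m],[0,1,l],[0,0,1]] is encoded as the triple (k, l, m). *)
Definition heis (A : Type) := (A * A * A)%type.

Section Heis.
Variable A : comRingType.

Definition hmul (g h : heis A) : heis A :=
  let: (k, l, m) := g in let: (k', l', m') := h in
  (k + k', l + l', m + m' + k * l').

Definition hinv (g : heis A) : heis A :=
  let: (k, l, m) := g in (- k, - l, - m + k * l).

Definition he : heis A := (0, 0, 0).
Definition hx : heis A := (1, 0, 0).
Definition hy : heis A := (0, 1, 0).

Variable R : numFieldType.

Definition lreg (g : heis A) (f : heis A -> R) : heis A -> R :=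
  fun h => f (hmul (hinv g) h).

Definition lap (f : heis A -> R) : heis A -> R :=
  fun h => 4%:R^-1 * (lreg hx f h + lreg (hinv hx) f h
                      + lreg hy f h + lreg (hinv hy) f h).

End Heis.

Definition delta_e (A : comRingType) (R : numFieldType) : heis A -> R :=
  fun h => if h == he A then 1 else 0.

Definition ip_fin (A : finComRingType) (R : numFieldType)
  (f g : heis A -> R) : R := \sum_(h : heis A) f h * g h.

(* l^2(H) inner product against delta_e:  sum_h f(h) delta_e(h) = f(e)
   (delta_e has singleton support, so the series reduces to one term). *)
Definition ip_delta_e_int (R : numFieldType) (f : heis int -> R) : R :=
  f (he int).

From mathcomp Require Import all_boot all_order all_algebra.
From mathcomp Require Import zify.
Set Implicit Arguments. Unset Strict Implicit. Unset Printing Implicit Defensive.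
Import Order.TTheory GRing.Theory Num.Theory.
Local Open Scope ring_scope.

(* Reduction mod N is a homomorphism pi : H -> H_N fixing x and y, so pulling
   back along it commutes with the Laplacians: (Delta_N^k delta_e)(e) equals
   (Delta^k (delta_e o pi))(e).  The latter only sees the values of
   delta_e o pi at words of length <= k in x, y, whose entries are bounded in
   absolute value by k, k and k^2 < N; there pi sees no wrap-around, so
   delta_e o pi = delta_e. *)

Section HeisMap.
Variables (A B : comNzRingType) (f : {rmorphism A -> B}) (R : numFieldType).

Definition heis_map (g : heis A) : heis B :=
  let: (k, l, m) := g in (f k, f l, f m).

Lemma heis_map_mul g h : heis_map (hmul g h) = hmul (heis_map g) (heis_map h).
Proof. by case: g => [[? ?] ?]; case: h => [[? ?] ?] /=; rewrite !rmorphD rmorphM. Qed.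

Lemma heis_map_inv g : heis_map (hinv g) = hinv (heis_map g).
Proof. by case: g => [[? ?] ?] /=; rewrite rmorphD !rmorphN rmorphM. Qed.

Lemma heis_map_e : heis_map (he A) = he B.
Proof. by rewrite /= rmorph0. Qed.

Lemma heis_map_x : heis_map (hx A) = hx B.
Proof. by rewrite /= rmorph0 rmorph1. Qed.

Lemma heis_map_y : heis_map (hy A) = hy B.
Proof. by rewrite /= rmorph0 rmorph1. Qed.

Lemma lreg_heis_map g (u : heis B -> R) h :
  lreg g (u \o heis_map) h = lreg (heis_map g) u (heis_map h).
Proof. by rewrite /lreg /= heis_map_mul heis_map_inv. Qed.

Lemma lap_heis_map (u : heis B -> R) h :
  lap u (heis_map h) = lap (u \o heis_map) h.
Proof.
rewrite /lap !lreg_heis_map !heis_map_inv.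
by rewrite heis_map_x heis_map_y.
Qed.

End HeisMap.

Lemma eq_lap (A : comNzRingType) (R : numFieldType) (u v : heis A -> R) h :
  u =1 v -> lap u h = lap v h.
Proof. by move=> uv; rewrite /lap /lreg !uv. Qed.

Lemma iter_lap_heis_map (A B : comNzRingType) (f : {rmorphism A -> B})
    (R : numFieldType) k (u : heis B -> R) h :
  iter k (@lap B R) u (heis_map f h) = iter k (@lap A R) (u \o heis_map f) h.
Proof.
elim: k h => [|k IH] h //=.
by rewrite lap_heis_map; apply: eq_lap => h'; apply: IH.
Qed.

Lemma ip_fin_delta_e (A : finComNzRingType) (R : numFieldType) (u : heis A -> R) :
  ip_fin u (@delta_e A R) = u (he A).
Proof.
rewrite /ip_fin (bigD1 (he A)) //= big1 ?addr0 /delta_e ?eqxx ?mulr1 //.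
by move=> h /negbTE ->; rewrite mulr0.
Qed.

Definition heis_gens (A : comNzRingType) : seq (heis A) :=
  [:: hx A; hinv (hx A); hy A; hinv (hy A)].

Definition heis_box (i : nat) (h : heis int) : bool :=
  let: (k, l, m) := h in [&& (`|k| <= i)%N, (`|l| <= i)%N & (`|m| <= i ^ 2)%N].

Lemma heis_box_mul_gen i s h : s \in heis_gens int ->
  heis_box i h -> heis_box i.+1 (hmul (hinv s) h).
Proof.
case: h => [[k l] m] /=.
by rewrite !inE => /or4P[] /eqP -> /and3P[? ? ?] /=; apply/and3P; split; lia.
Qed.

Lemma iter_lap_box_local (R : numFieldType) k i (u v : heis int -> R) h :
  heis_box i h -> {in heis_box (i + k), u =1 v} ->
  iter k (@lap int R) u h = iter k (@lap int R) v h.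
Proof.
elim: k i h => [|k IH] i h hb uv /=; first by apply: uv; rewrite addn0.
have step s : s \in heis_gens int ->
    iter k (@lap int R) u (hmul (hinv s) h) = iter k (@lap int R) v (hmul (hinv s) h).
  by move=> hs; apply: (IH i.+1); [exact: heis_box_mul_gen | rewrite addSnnS].
by rewrite /lap /lreg !step ?inE ?eqxx ?orbT.
Qed.

Lemma intr_Zp_eq0 (N : nat) (z : int) : (1 < N)%N -> (`|z| < N)%N ->
  (z%:~R : 'Z_N) = 0 -> z = 0.
Proof.
move=> N1; case: z => m /= Hm.
  rewrite -pmulrn Zp_nat => /(congr1 val) /=.
  by rewrite Zp_cast // modn_small //= => ->.
move=> /eqP; rewrite NegzE intrN oppr_eq0 -pmulrn Zp_nat => /eqP /(congr1 val) /=.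
by rewrite Zp_cast // modn_small.
Qed.

Lemma delta_e_intr_box (R : numFieldType) (N i : nat) h :
  (1 < N)%N -> (i ^ 2 < N)%N -> heis_box i h ->
  @delta_e 'Z_N R (heis_map intr h) = @delta_e int R h.
Proof.
case: h => [[k l] m] N1 iN /and3P[hk hl hm]; rewrite /delta_e /=.
have inj z : (`|z| <= i ^ 2)%N -> (z%:~R : 'Z_N) = 0 -> z = 0.
  by move=> hz; apply: intr_Zp_eq0 => //; lia.
have hk2 : (`|k| <= i ^ 2)%N by nia.
have hl2 : (`|l| <= i ^ 2)%N by nia.
case: eqP => [[/(inj _ hk2)-> /(inj _ hl2)-> /(inj _ hm)->]|]; rewrite ?eqxx //.
by case: eqP => // [[-> -> ->]]; rewrite !mulr0z.
Qed.

Theorem lemma4p1 (R : numFieldType) (n : nat) (hn : (0 < n)%N) (k : nat)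
  (hk : (k <= n)%N) :
  ip_delta_e_int (iter k (@lap int R) (@delta_e int R)) =
  ip_fin (iter k (@lap 'Z_(n ^ 2 + 1) R) (@delta_e 'Z_(n ^ 2 + 1) R))
         (@delta_e 'Z_(n ^ 2 + 1) R).
Proof.
set N := (n ^ 2 + 1)%N.
rewrite ip_fin_delta_e -(heis_map_e intr) iter_lap_heis_map.
apply: (@iter_lap_box_local R k 0) => // h; rewrite add0n => hb.
have N_gt1 : (1 < N)%N by rewrite /N addn1 ltnS expn_gt0 hn.
have kN : (k ^ 2 < N)%N by rewrite /N addn1 ltnS leq_exp2r.
by rewrite /= (delta_e_intr_box _ N_gt1 kN hb).
Qed.
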